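(* There is an absolute constant $K$ such that the following holds. Let $C\ge1$, let $I$ be an instance of dynamic bin packing with migration delays in which every item has duration at least $1$, run Algorithm 3 (described in the context) on $I$, and let $\tilde I_s$ be the instance of small parts defined in the context. Then $\mathrm{FirstFit}(\tilde I_s)\le K\sqrt{C}\cdot\mathrm{OPT}(I)$.
   Context: Dynamic bin packing with migration delays: bins have capacity $1$; items arrive online at times $a_i\ge0$ with size $s_i\in[0,1]$ and initial duration $d_i>0$ (unknown at arrival). Each migration of an item (moving it to another bin) increases its duration by $C$. A bin is open while nonempty. For an instance $J$ (a set of items with arrival times, sizes, durations), $\mathrm{FirstFit}(J)$ is the total active time $\int_0^\infty(\text{number of open bins at } t)\,dt$ of the FirstFit algorithm on $J$ (each arriving item goes into the earliest-opened open bin with enough remaining capacity, else a new bin; no migrations), and $\mathrm{OPT}(J)=\int_0^\infty\mathrm{OPT}_t\,dt$ with $\mathrm{OPT}_t$ the minimum number of unit bins needed to pack the items of $J$ present at time $t$. Algorithm 3: maintain two disjoint pools of bins $I_s$ and $I_b$. Each arriving item is placed into $I_s$ by FirstFit (within that pool). When an item has been in $I_s$ for exactly $\sqrt{C}$ time, it is migrated into $I_b$ by FirstFit. When an item has been in $I_b$ for exactly $C+\sqrt{C}$ time since its most recent migration, it is migrated into $I_b$ by FirstFit. Small parts: for each item $i$ of $I$, let $t_1$ be the time of its first migration by Algorithm 3, if any. The small part of $i$ is an item of size $s_i$, arrival time $a_i$, and duration $t_1-a_i$ if $i$ is ever migrated and $d_i$ otherwise. $\tilde I_s$ is the instance consisting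 of all small parts. *)

From HB Require Import structures.
From mathcomp Require Import all_boot all_order all_algebra.
From mathcomp Require Import all_classical all_reals all_analysis.
Set Implicit Arguments. Unset Strict Implicit. Unset Printing Implicit Defensive.
Import Order.TTheory GRing.Theory Num.Theory.
Local Open Scope ring_scope.

Section DBP.
Variable R : realType.

Record item := Item { iarr : R; isize : R; idur : R }.

Definition item0 : item := Item 0 0 0.

Definition dep (x : item) : R := iarr x + idur x.
Definition present (t : R) (x : item) : bool := (iarr x <= t) && (t < dep x).

Definition valid_item (x : item) : bool :=
  [&& 0 <= iarr x, 0 <= isize x, isize x <= 1 & 0 < idur x].

Definition present_items (J : seq item) (t : R) : seq item := [seq x <- J | present t x].

Definition packable (P : seq item) (k : nat) : bool :=
  [exists f : {ffun 'I_(size P) -> 'I_k},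
     [forall b : 'I_k, \sum_(i < size P | f i == b) isize (nth item0 P i) <= 1]].

(* OPT_t: minimum number of unit bins for the items present at time t
   (size P bins always suffice for valid items, hence the default value). *)
Definition OPT_t (J : seq item) (t : R) : nat :=
  let P := present_items J t in
  \big[minn/size P]_(k < (size P).+1 | packable P k) k.

Definition OPT (J : seq item) : \bar R :=
  (\int[lebesgue_measure]_(t in `[0%R, +oo[%classic) ((OPT_t J t)%:R)%:E)%E.

(* A bin is represented by the list of all items ever put in it (in order). *)
Definition load_at (t : R) (b : seq item) : R := \sum_(y <- b | t < dep y) isize y.
Definition alive (t : R) (b : seq item) : bool := has (fun y => t < dep y) b.

Fixpoint ff_insert (t : R) (x : item) (bs : seq (seq item)) : seq (seq item) :=
  match bs with
  | [::] => [:: [:: x]]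
  | b :: bs' => if load_at t b + isize x <= 1 then rcons b x :: bs'
                else b :: ff_insert t x bs'
  end.

(* state: (open bins in opening order, closed bins).  At an arrival at time t,
   items with departure time <= t have already left, and bins that became
   empty are closed (and never reused). *)
Definition ff_step (st : seq (seq item) * seq (seq item)) (x : item) :=
  let t := iarr x in
  (ff_insert t x [seq b <- st.1 | alive t b],
   st.2 ++ [seq b <- st.1 | ~~ alive t b]).

(* items are processed by arrival time; simultaneous arrivals in list order
   (mathcomp's merge sort is stable) *)
Definition ff_bins (J : seq item) : seq (seq item) :=
  let st := foldl ff_step ([::], [::]) (sort (fun x y => iarr x <= iarr y) J) in
  st.2 ++ st.1.

Definition bin_open (b : seq item) : R := iarr (head item0 b).
Definition bin_close (b : seq item) : R := foldr Num.max (bin_open b) [seq dep y | y <- b].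

Definition ff_open_bins (J : seq item) (t : R) : nat :=
  count (fun b => (bin_open b <= t) && (t < bin_close b)) (ff_bins J).

Definition FirstFit (J : seq item) : \bar R :=
  (\int[lebesgue_measure]_(t in `[0%R, +oo[%classic) ((ff_open_bins J t)%:R)%:E)%E.

(* Under Algorithm 3 an item sits in I_s from its arrival a_i until it departs
   (time a_i + d_i) or until it has been there sqrt C time, at which moment it
   is first migrated. *)
Definition first_migration (C : R) (x : item) : option R :=
  if Num.sqrt C < idur x then Some (iarr x + Num.sqrt C) else None.

Definition small_part (C : R) (x : item) : item :=
  Item (iarr x) (isize x)
       (match first_migration C x with Some t1 => t1 - iarr x | None => idur x end).

Definition small_parts (C : R) (I : seq item) : seq item := map (small_part C) I.

End DBP.

(* Let L = sqrt C, an upper bound on the duration of every small part, and fix a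
   time t at which FirstFit, run on the small parts, has k > 0 open bins; some
   item of I is then present, so OPT_t >= 1.  If bin u was opened before bin v,
   the last item z put into v did not fit into u.  Since v still holds an item
   present at t, z arrived after t - L, and the items of u still present at the
   arrival of z arrived after t - 2L.  Hence the items of any two open bins
   that arrived in (t - 2L, t] have total size more than 1, and
   k <= 1 + 2 * (total size of the items arrived in (t - 2L, t]).
   Integrating over t gives FirstFit <= OPT(I) + 4L * sum_i s_i, and since every
   item lasts at least 1, sum_i s_i <= OPT(I); so K = 5 works. *)

From HB Require Import structures.
From mathcomp Require Import all_boot all_order all_algebra.
From mathcomp Require Import all_classical all_reals all_analysis.
From mathcomp Require Import ring lra measurable_realfun.
Import Order.TTheory GRing.Theory Num.Theory.
Local Open Scope ring_scope.
Set Implicit Arguments. Unset Strict Implicit. Unset Printing Implicit Defensive.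

Definition item_tuple (R : realType) (x : item R) := (iarr x, isize x, idur x).
Definition tuple_item (R : realType) (p : R * R * R) := Item p.1.1 p.1.2 p.2.
Lemma item_tupleK (R : realType) : cancel (@item_tuple R) (@tuple_item R).
Proof. by case. Qed.
HB.instance Definition _ (R : realType) :=
  Equality.copy (item R) (can_type (@item_tupleK R)).

Section General.
Variable R : realDomainType.

Lemma all_flatten (T : Type) (a : pred T) (ss : seq (seq T)) :
  all a (flatten ss) = all (all a) ss.
Proof. by elim: ss => //= s ss IH; rewrite all_cat IH. Qed.

(* Summing [1 < W u + W v] over consecutive pairs. *)
Lemma sorted_size_le_sum (T : eqType) (r : rel T) (W : T -> R) (s : seq T) :
  sorted r s -> {in s &, forall u v, r u v -> 1 < W u + W v} ->
  {in s, forall u, 0 <= W u} ->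
  (size s)%:R <= 1 + 2 * \sum_(u <- s) W u.
Proof.
case: s => [|a s] /=; first by rewrite big_nil mulr0 addr0 ler01.
suff chain : forall a, path r a s -> {in a :: s &, forall u v, r u v -> 1 < W u + W v} ->
    {in a :: s, forall u, 0 <= W u} ->
    (size s).+1%:R + W a <= 1 + 2 * \sum_(u <- a :: s) W u.
  move=> hp hr hW; have := hW a (mem_head _ _); have := chain a hp hr hW; lra.
elim: s => [|b s IH] {}a /=.
  by move=> _ _ hW; rewrite big_seq1; have := hW a (mem_head _ _); lra.
move=> /andP[hab hp] hr hW.
have hab1 : 1 < W a + W b by apply: hr; rewrite ?inE ?eqxx ?orbT.
have := IH b hp (sub_in2 (fun u => @mem_behead _ _ u) hr)
                (sub_in1 (fun u => @mem_behead _ _ u) hW).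
rewrite !big_cons -(addn1 (size s).+1) natrD; have := hW a (mem_head _ _); lra.
Qed.

Lemma sorted_filter_split (T : eqType) (f : T -> R) (t : R) (s : seq T) :
  sorted (fun x y => f x <= f y) s ->
  s = [seq x <- s | f x <= t] ++ [seq x <- s | ~~ (f x <= t)].
Proof.
elim: s => [|x s IH] //= hpath; have hs := path_sorted hpath.
case: ifP => hx /=; first by rewrite -IH.
have /allP hmin : all (fun y => f x <= f y) s.
  by apply: order_path_min hpath => ? ? ?; apply: le_trans.
have late y : y \in s -> (f y <= t) = false.
  by move=> /hmin hxy; apply: contraFF hx; apply: le_trans.
rewrite (eq_in_filter (a2 := pred0)) ?filter_pred0 => [|y /late -> //].
by rewrite (eq_in_filter (a2 := predT)) ?filter_predT => // y /late ->.
Qed.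

Lemma lee_add_scale (F O : \bar R) (c S : R) : 0 <= c ->
  (S%:E <= O)%E -> (F <= O + (c * S)%:E)%E -> (F <= (1 + c)%:E * O)%E.
Proof.
move=> hc; case: O => [r | | ].
- rewrite lee_fin -EFinD -EFinM => hS /le_trans; apply.
  by rewrite lee_fin mulrDl mul1r lerD2l ler_wpM2l.
- by move=> _ _; rewrite mulry gtr0_sg ?mul1e ?leey //; lra.
- by rewrite leeNy_eq.
Qed.

End General.

Section FirstFitRun.
Variable R : realType.
Implicit Types (x y : item R) (b u v : seq (item R)) (bs : seq (seq (item R))).
Implicit Types (st : seq (seq (item R)) * seq (seq (item R))).

Definition rejects u v :=
  1 < load_at (iarr (last (item0 R) v)) u + isize (last (item0 R) v).

Lemma load_at_rcons t b x : 0 <= isize x -> load_at t b <= load_at t (rcons b x).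
Proof.
move=> hx; rewrite /load_at big_rcons /=.
by case: ifP => _; [rewrite lerDl | rewrite addr0].
Qed.

Lemma rejects_rcons u v x : 0 <= isize x -> rejects u v -> rejects (rcons u x) v.
Proof. by move=> hx /lt_le_trans; apply; rewrite lerD2r load_at_rcons. Qed.

Lemma all_ff_insert (Q : pred (seq (item R))) t x bs : all Q bs -> Q [:: x] ->
  {in bs, forall b, Q (rcons b x)} -> all Q (ff_insert t x bs).
Proof.
elim: bs => [|b bs IH] /=; first by move=> _ ->.
move=> /andP[hb hbs] hx hr; case: ifP => _ /=; first by rewrite hbs hr ?mem_head.
by rewrite hb IH // => b' hb'; apply: hr; rewrite inE hb' orbT.
Qed.

Lemma pairwise_rejects_ff_insert x bs : 0 <= isize x -> pairwise rejects bs ->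
  pairwise rejects (ff_insert (iarr x) x bs).
Proof.
move=> hx; elim: bs => [|b bs IH] //= /andP[hb hbs]; case: ifP => hfit /=.
  by rewrite hbs andbT; apply: sub_all hb => v; apply: rejects_rcons.
rewrite IH // andbT; apply: all_ff_insert => //.
  by rewrite /rejects /= ltNge hfit.
by move=> v _; rewrite /rejects last_rcons ltNge hfit.
Qed.

Lemma perm_ff_insert t x bs :
  perm_eq (flatten (ff_insert t x bs)) (rcons (flatten bs) x).
Proof.
elim: bs => [|b bs IH] //=; case: ifP => _ /=.
  by rewrite -!cats1 -!catA perm_cat2l perm_catC.
by rewrite rcons_cat perm_cat2l.
Qed.

Definition all_bins st := st.2 ++ st.1.

Lemma mem_all_bins_open st b : b \in st.1 -> b \in all_bins st.
Proof. by rewrite mem_cat orbC => ->. Qed.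

Lemma perm_ff_step st x :
  perm_eq (flatten (all_bins (ff_step st x))) (rcons (flatten (all_bins st)) x).
Proof.
rewrite /all_bins /ff_step /= !flatten_cat -catA.
apply: (@perm_trans _ (flatten st.2 ++ flatten [seq b <- st.1 | ~~ alive (iarr x) b] ++
                         rcons (flatten [seq b <- st.1 | alive (iarr x) b]) x)).
  by rewrite !perm_cat2l perm_ff_insert.
rewrite rcons_cat perm_cat2l -!cats1 catA perm_cat2r -flatten_cat.
by apply: perm_flatten; rewrite perm_catC perm_filterC.
Qed.

Lemma alive_le t t' b : t <= t' -> alive t' b -> alive t b.
Proof. by move=> htt'; apply: sub_has => y; apply: le_lt_trans. Qed.

Definition ff_inv st tau P :=
  [/\ pairwise rejects st.1,
      all (fun b => all (fun y => iarr y <= iarr (last (item0 R) b)) b) st.1,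
      all (fun y => iarr y <= tau) (flatten (all_bins st)),
      all (fun b => ~~ alive tau b) st.2 &
      perm_eq (flatten (all_bins st)) P].

Lemma ff_invW st tau tau' P : tau <= tau' -> ff_inv st tau P -> ff_inv st tau' P.
Proof.
move=> htau [h1 h2 h3 h4 h5]; split => //.
  by apply: sub_all h3 => y /le_trans; apply.
by apply: sub_all h4 => b; apply/contra/alive_le.
Qed.

Lemma ff_inv_step st tau P x : ff_inv st tau P -> tau <= iarr x -> 0 <= isize x ->
  ff_inv (ff_step st x) (iarr x) (rcons P x).
Proof.
move=> [h1 h2 h3 h4 h5] hx hs; have hp := perm_ff_step st x.
split.
- exact/pairwise_rejects_ff_insert/pairwise_filter.
- apply: all_ff_insert => /=.
  + by rewrite all_filter; apply: sub_all h2 => b hb; apply/implyP.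
  + by rewrite le_refl.
  move=> b; rewrite mem_filter => /andP[_ hb].
  rewrite last_rcons all_rcons le_refl /=.
  move: h3; rewrite all_flatten all_cat => /andP[_ /allP /(_ b hb)].
  by apply: sub_all => y /le_trans; apply.
- rewrite (perm_all _ hp) all_rcons le_refl /=.
  by apply: sub_all h3 => y /le_trans; apply.
- rewrite /= all_cat filter_all andbT.
  by apply: sub_all h4 => b; apply/contra/alive_le.
- by apply: perm_trans hp _; rewrite -!cats1 perm_cat2r.
Qed.

Lemma ff_inv_foldl xs st tau P t : ff_inv st tau P -> tau <= t ->
  sorted (fun x y => iarr x <= iarr y) xs ->
  all (fun x => tau <= iarr x <= t) xs -> all (fun x => 0 <= isize x) xs ->
  ff_inv (foldl (@ff_step R) st xs) t (P ++ xs).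
Proof.
elim: xs st tau P => [|x xs IH] st tau P /=.
  by move=> hI htau _ _ _; rewrite cats0; apply: ff_invW hI.
move=> hI htau hsort /andP[/andP[hx1 hx2] hxs] /andP[hx3 hxs'].
rewrite -cat_rcons; apply: (IH _ (iarr x)) => //.
- exact: ff_inv_step hI hx1 hx3.
- by move: hsort => /path_sorted.
have /allP hmin : all (fun y => iarr x <= iarr y) xs.
  by apply: order_path_min hsort => ? ? ?; apply: le_trans.
by apply/allP => y hy; rewrite hmin //; move/allP: hxs => /(_ y hy) /andP[].
Qed.

Definition bin_active t b := (bin_open b <= t) && alive t b.

Lemma bin_activeE t b : (bin_open b <= t) && (t < bin_close b) = bin_active t b.
Proof.
have lt_foldr_max a0 : (t < foldr Num.max a0 [seq dep y | y <- b]) = (t < a0) || alive t b.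
  by elim: b => [|y b' IH] /=; rewrite ?orbF // lt_max IH orbCA.
by rewrite /bin_active /bin_close lt_foldr_max; case: leP.
Qed.

Lemma count_active_ff_insert t x bs : t < iarr x -> all (alive (iarr x)) bs ->
  count (bin_active t) (ff_insert (iarr x) x bs) = count (bin_active t) bs.
Proof.
move=> ht; elim: bs => [|b bs IH] /=; first by rewrite /bin_active /bin_open /= leNgt ht.
move=> /andP[hb hbs]; case: ifP => _ /=; last by rewrite IH.
congr (_ + _)%N; case: b hb {IH} => [|y b] // hb.
by rewrite /bin_active /alive has_rcons -/(alive t (y :: b)) (alive_le (ltW ht) hb) orbT.
Qed.

Lemma count_active_ff_step t st x : t < iarr x ->
  count (bin_active t) (all_bins (ff_step st x)) = count (bin_active t) (all_bins st).
Proof.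
move=> ht; rewrite /all_bins /ff_step /= !count_cat count_active_ff_insert ?filter_all //.
rewrite -addnA -count_cat; congr (_ + _)%N; apply/permP.
by rewrite perm_catC perm_filterC.
Qed.

Lemma count_active_foldl t xs st : all (fun x => t < iarr x) xs ->
  count (bin_active t) (all_bins (foldl (@ff_step R) st xs)) =
  count (bin_active t) (all_bins st).
Proof.
elim: xs st => [|x xs IH] st //= /andP[hx hxs].
by rewrite IH // count_active_ff_step.
Qed.

End FirstFitRun.

Section OpenBinsBound.
Variable R : realType.
Implicit Types (y : item R) (b u v : seq (item R)).

Definition recent_size (t0 : R) b := \sum_(y <- b | t0 < iarr y) isize y.

Variables (st : seq (seq (item R)) * seq (seq (item R))) (t L : R) (P : seq (item R)).
Hypotheses (hinv : ff_inv st t P) (size_ge0 : {in P, forall y, 0 <= isize y})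
           (dur_le : {in P, forall y, idur y <= L}).

Lemma mem_bin_ff_inv b y : b \in all_bins st -> y \in b -> y \in P.
Proof.
case: hinv => _ _ _ _ hperm hb hy; rewrite -(perm_mem hperm).
by apply/flattenP; exists b.
Qed.

Lemma recent_size_ge0 t0 b : b \in all_bins st -> 0 <= recent_size t0 b.
Proof.
move=> hb; rewrite /recent_size big_seq_cond; apply: sumr_ge0 => y /andP[hy _].
exact/size_ge0/(mem_bin_ff_inv hb).
Qed.

Lemma rejects_recent_size u v : u \in st.1 -> v \in st.1 -> alive t v -> rejects u v ->
  1 < recent_size (t - 2 * L) u + recent_size (t - 2 * L) v.
Proof.
case: hinv => _ hlast harr _ _ hu hv hva; rewrite /rejects.
have [y hy hyt] := hasP hva.
case: v hv hva hy => [|w v'] // hv hva hy; set z := last _ _.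
have hz : z \in w :: v' by rewrite /z /=; apply: mem_last.
have hzt : iarr z <= t.
  by move: harr; rewrite all_flatten => /allP /(_ _ (mem_all_bins_open hv)) /allP; apply.
have hyz : iarr y <= iarr z by move/allP: hlast => /(_ _ hv) /allP; apply.
have hyL := dur_le (mem_bin_ff_inv (mem_all_bins_open hv) hy).
have hzL : t - L < iarr z by move: hyt; rewrite /dep; lra.
have hload : load_at (iarr z) u <= recent_size (t - 2 * L) u.
  rewrite /load_at /recent_size big_mkcond [X in _ <= X]big_mkcond /= !big_seq.
  apply: ler_sum => y' hy'.
  have hy'P := mem_bin_ff_inv (mem_all_bins_open hu) hy'.
  have := size_ge0 hy'P; have := dur_le hy'P; rewrite /dep.
  by do 2 case: ifP => //; lra.
have hzsize : isize z <= recent_size (t - 2 * L) (w :: v').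
  rewrite /recent_size (perm_big _ (perm_to_rem hz)) big_cons ifT; last by lra.
  rewrite lerDl big_seq_cond; apply: sumr_ge0 => y' /andP[hy' _].
  exact/size_ge0/(mem_bin_ff_inv (mem_all_bins_open hv))/(mem_rem hy').
lra.
Qed.

Lemma count_alive_le :
  (count (alive t) st.1)%:R <= 1 + 2 * \sum_(y <- P | t - 2 * L < iarr y) isize y.
Proof.
case: (hinv) => hpair _ _ _ hperm.
rewrite -size_filter.
apply: le_trans (sorted_size_le_sum (W := recent_size (t - 2 * L)) _ _ _) _.
- exact/pairwise_sorted/pairwise_filter/hpair.
- move=> u v; rewrite !mem_filter => /andP[_ hu] /andP[hva hv].
  exact: rejects_recent_size.
- by move=> u; rewrite mem_filter => /andP[_ /mem_all_bins_open]; apply: recent_size_ge0.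
rewrite lerD2l ler_pM2l // -(perm_big _ hperm) big_flatten /= big_filter.
rewrite [X in _ <= X]big_cat /= -[X in X <= _]add0r; apply: lerD.
  by rewrite big_seq; apply: sumr_ge0 => b hb; apply: recent_size_ge0; rewrite mem_cat hb.
rewrite big_mkcond !big_seq; apply: ler_sum => b hb.
by case: ifP => // _; apply/recent_size_ge0/mem_all_bins_open.
Qed.

End OpenBinsBound.

Section FirstFitAtTime.
Variable R : realType.
Implicit Types (J : seq (item R)) (st : seq (seq (item R)) * seq (seq (item R))).

Lemma ff_inv_perm st t P P' : perm_eq P P' -> ff_inv st t P -> ff_inv st t P'.
Proof. by move=> hPP' [h1 h2 h3 h4 h5]; split => //; apply: perm_trans hPP'. Qed.

Lemma ff_state_at J t : all (fun y => 0 <= iarr y) J -> all (fun y => 0 <= isize y) J ->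
  0 <= t -> exists st, ff_inv st t [seq y <- J | iarr y <= t] /\
                       ff_open_bins J t = count (bin_active t) (all_bins st).
Proof.
move=> harr hsize ht.
pose le := fun x y : item R => iarr x <= iarr y.
have hsort : sorted le (sort le J) by apply: sort_sorted => x y; apply: le_total.
have hperm : perm_eq (sort le J) J by rewrite perm_sort.
set S1 := [seq x <- sort le J | iarr x <= t].
exists (foldl (@ff_step R) ([::], [::]) S1); split.
  apply: ff_inv_perm (perm_filter _ hperm) _.
  have hS1 y : y \in S1 -> y \in J /\ iarr y <= t.
    by rewrite mem_filter (perm_mem hperm) => /andP[].
  apply: (@ff_inv_foldl _ S1 _ 0 [::]) => //.
  - by apply: sorted_filter => // ? ? ?; apply: le_trans.
  - by apply/allP => y /hS1[hy ->]; rewrite (allP harr).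
  - by apply/allP => y /hS1[hy _]; apply: (allP hsize).
rewrite /ff_open_bins /ff_bins -/le (sorted_filter_split t hsort) foldl_cat -/S1.
rewrite (eq_count (bin_activeE t)) -[_ ++ _]/(all_bins _) count_active_foldl //.
by apply/allP => y; rewrite mem_filter ltNge => /andP[].
Qed.

Lemma count_active_le_alive st t P : ff_inv st t P ->
  (count (bin_active t) (all_bins st) <= count (alive t) st.1)%N.
Proof.
case=> _ _ _ hdead _; rewrite count_cat.
rewrite (eq_in_count (a2 := pred0)) ?count_pred0; last first.
  by move=> b /(allP hdead) /negbTE; rewrite /bin_active => ->; rewrite andbF.
by apply: sub_count => b /andP[].
Qed.

Lemma ff_open_bins_present J t : all (fun y => 0 <= iarr y) J ->
  all (fun y => 0 <= isize y) J -> 0 <= t -> (0 < ff_open_bins J t)%N ->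
  exists2 y, y \in J & present t y.
Proof.
move=> harr hsize ht; have [st [hinv ->]] := ff_state_at harr hsize ht.
have [_ _ _ _ hperm] := hinv.
move=> /leq_trans /(_ (count_active_le_alive hinv)); rewrite -has_count.
case/hasP=> b hb /hasP[y hy hyt].
have : y \in [seq y <- J | iarr y <= t].
  by rewrite -(perm_mem hperm); apply/flattenP; exists b; rewrite ?mem_all_bins_open.
by rewrite mem_filter => /andP[hya hyJ]; exists y; rewrite // /present hya.
Qed.

Lemma ff_open_bins_le J t L : all (fun y => 0 <= iarr y) J ->
  all (fun y => 0 <= isize y) J -> all (fun y => idur y <= L) J -> 0 <= t ->
  (ff_open_bins J t)%:R <=
    1 + 2 * \sum_(y <- J | (iarr y <= t) && (t - 2 * L < iarr y)) isize y.
Proof.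
move=> harr hsize hdur ht; have [st [hinv ->]] := ff_state_at harr hsize ht.
apply: le_trans (_ : _ <= (count (alive t) st.1)%:R) _.
  by rewrite ler_nat; apply: count_active_le_alive hinv.
rewrite -big_filter_cond.
apply: count_alive_le hinv _ _ => y; rewrite mem_filter => /andP[_ hy].
  exact: (allP hsize).
exact: (allP hdur).
Qed.

End FirstFitAtTime.

Section OPTLowerBounds.
Variable R : realType.
Implicit Types (J P : seq (item R)).

Lemma packable_sum_size P k : packable P k -> \sum_(x <- P) isize x <= k%:R.
Proof.
move=> /existsP[f /forallP hf].
rewrite (big_nth (item0 R)) big_mkord (partition_big (fun i => f i) xpredT) //=.
apply: le_trans (_ : \sum_(j < k) (1 : R) <= _); first by apply: ler_sum => j _; apply: hf.
by rewrite sumr_const card_ord.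
Qed.

Lemma sum_size_le_size P :
  {in P, forall x, isize x <= 1} -> \sum_(x <- P) isize x <= (size P)%:R.
Proof.
elim: P => [|x P IH] hP; first by rewrite big_nil.
rewrite big_cons /= -add1n natrD lerD ?hP ?mem_head // IH // => y hy.
by rewrite hP // inE hy orbT.
Qed.

Lemma sum_present_le_OPT_t J t : all (@valid_item R) J ->
  \sum_(x <- present_items J t) isize x <= (OPT_t J t)%:R.
Proof.
move=> hv; rewrite /OPT_t; set P := present_items J t.
apply: (big_ind (fun k : nat => \sum_(x <- P) isize x <= k%:R)).
- apply: sum_size_le_size => x; rewrite mem_filter => /andP[_ /(allP hv)].
  by case/and4P=> _ _ ->.
- by move=> a b ha hb; rewrite /minn; case: ifP.
- by move=> k; apply: packable_sum_size.
Qed.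

Lemma OPT_t_gt0 J t : present_items J t != [::] -> (0 < OPT_t J t)%N.
Proof.
rewrite /OPT_t; set P := present_items J t => hne.
have hs : (0 < size P)%N by rewrite lt0n size_eq0.
apply: (big_ind (fun k : nat => 0 < k)%N) => //.
- by move=> a b ha hb; rewrite /minn; case: ifP.
- move=> k /existsP[f _]; rewrite lt0n; apply/eqP => hk.
  by case: (f (Ordinal hs)); rewrite hk.
Qed.

End OPTLowerBounds.

Section Windows.
Variable R : realType.
Notation mR := (measurableTypeR R).
Notation D := (`[0%R, +oo[%classic : set mR).

Definition in_window (p : R * R) (t : R) := (p.1 <= t) && (t < p.2).

Lemma in_windowE p t : in_window p t = (t \in `[p.1, p.2[).
Proof. by rewrite in_itv. Qed.

Lemma measurable_windows_preimage (T : Type) (ps : seq (R * R)) (Phi : seq bool -> T)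
    (Y : set T) :
  measurable (fun t : mR => Y (Phi (map (in_window ^~ t) ps))).
Proof.
elim: ps Phi => [|p ps IH] Phi /=.
  have [hY|hY] := pselect (Y (Phi [::])).
    by rewrite (_ : (fun _ => _) = setT) //; apply/seteqP; split.
  by rewrite (_ : (fun _ => _) = set0) //; apply/seteqP; split.
rewrite (_ : (fun t : mR => _) =
  ([set` (`[p.1, p.2[)%R] `&` (fun t => Y (Phi (true :: map (in_window ^~ t) ps)))) `|`
  (~` [set` (`[p.1, p.2[)%R] `&` (fun t => Y (Phi (false :: map (in_window ^~ t) ps)))))%classic.
  apply: measurableU; apply: measurableI.
  - exact: measurable_itv.
  - exact: (IH (fun bs => Phi (true :: bs))).
  - by apply: measurableC; apply: measurable_itv.
  - exact: (IH (fun bs => Phi (false :: bs))).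
apply/seteqP; split => t /=; rewrite /= -in_windowE; case: (in_window p t) => /=.
- by left.
- by right.
- by case=> [[]|[]].
- by case=> [[]|[]].
Qed.

Lemma measurable_fun_windows (ps : seq (R * R)) (Phi : seq bool -> \bar R) (A : set mR) :
  measurable_fun A (fun t : mR => Phi (map (in_window ^~ t) ps)).
Proof. by move=> mA Y _; apply: measurableI (measurable_windows_preimage ps Phi Y). Qed.

Lemma measurable_window_sum (T : Type) (s : seq T) (c : T -> R) (f : T -> R * R)
    (A : set mR) :
  measurable_fun A (fun t : mR => (\sum_(x <- s) c x * (in_window (f x) t)%:R)%:E).
Proof.
rewrite (_ : (fun t => _) = (fun t => \sum_(x <- s) (c x * (in_window (f x) t)%:R)%:E)%E).
  apply: emeasurable_sum => x.
  exact: (measurable_fun_windows [:: f x] (fun bs => (c x * (head false bs)%:R)%:E)).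
by apply/funext => t; rewrite sumEFin.
Qed.

Lemma integral_window (a w c : R) : 0 <= a -> 0 <= w -> 0 <= c ->
  (\int[lebesgue_measure]_(t in D) (c * (in_window (a, a + w) t)%:R)%:E = (c * w)%:E)%E.
Proof.
move=> ha hw hc.
have hwin t :
    ((in_window (a, a + w) t)%:R : R) = \1_([set` (`[a, a + w[)%R]%classic : set mR) t.
  by rewrite indicE; congr (nat_of_bool _)%:R; apply/idP/idP; rewrite in_setE in_windowE.
under eq_integral => t _ do rewrite hwin.
have hwin0 : c < 0 -> (fun _ : R => [set` (`[a, a + w[)%R]%classic : set mR) c = set0.
  by move=> /lt_le_trans /(_ hc); rewrite ltxx.
have := integralZl_indic (m := lebesgue_measure) (measurable_itv `[0%R, +oo[%R)
  (fun _ : R => [set` (`[a, a + w[)%R]%classic : set mR) c hwin0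
  (measurable_itv _).
move=> /= ->; rewrite integral_indic ?setIidl //; last first.
  by move=> t /=; rewrite !in_itv /= andbT => /andP[/(le_trans ha)].
have := lebesgue_measure_itv `[a, a + w[%R; rewrite /= lte_fin ltrDl => ->.
case: (ltrP 0 w) => [_ | hw0]; first by rewrite -EFinD -EFinM addrAC subrr add0r.
have -> : w = 0 by apply/le_anti; rewrite hw0 hw.
by rewrite mule0 mulr0.
Qed.

Lemma integral_window_sum (T : eqType) (s : seq T) (a c : T -> R) (w : R) : 0 <= w ->
  {in s, forall x, 0 <= c x /\ 0 <= a x} ->
  (\int[lebesgue_measure]_(t in D) (\sum_(x <- s) c x * (in_window (a x, a x + w) t)%:R)%:E
     = (\sum_(x <- s) c x * w)%:E)%E.
Proof.
move=> hw; elim: s => [|x s IH] hs.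
  by under eq_integral => t _ do rewrite big_nil; rewrite integral0 big_nil.
have [hc ha] := hs x (mem_head _ _).
have hs' : {in s, forall y, 0 <= c y /\ 0 <= a y}.
  by move=> y hy; apply: hs; rewrite inE hy orbT.
have {}IH := IH hs'.
under eq_integral => t _ do rewrite big_cons EFinD.
rewrite ge0_integralD //.
- by rewrite integral_window // IH big_cons EFinD.
- by move=> t _; rewrite lee_fin mulr_ge0.
- exact: (measurable_fun_windows [:: (a x, a x + w)]
                                (fun bs => (c x * (head false bs)%:R)%:E)).
- move=> t _; rewrite lee_fin big_seq; apply: sumr_ge0 => y hy.
  by have [hcy _] := hs' y hy; rewrite mulr_ge0.
- exact: measurable_window_sum.
Qed.

End Windows.

Section SmallParts.
Variable R : realType.
Notation mR := (measurableTypeR R).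
Notation D := (`[0%R, +oo[%classic : set mR).
Implicit Types (I J : seq (item R)).

Lemma small_part_facts (C : R) (x : item R) :
  [/\ iarr (small_part C x) = iarr x, isize (small_part C x) = isize x,
      idur (small_part C x) <= Num.sqrt C & dep (small_part C x) <= dep x].
Proof.
rewrite /small_part /first_migration /dep /=; case: ifP => h /=.
  by rewrite addrAC subrr add0r lerD2l; split => //; apply: ltW.
by split => //; rewrite leNgt h.
Qed.

Lemma valid_item_ge0 (x : item R) : valid_item x -> 0 <= iarr x /\ 0 <= isize x.
Proof. by case/and4P. Qed.

Lemma ff_small_parts_le C I t : all (@valid_item R) I -> 0 <= t ->
  (ff_open_bins (small_parts C I) t)%:R <=
  (OPT_t I t)%:R +
    \sum_(x <- I) 2 * isize x * (in_window (iarr x, iarr x + 2 * Num.sqrt C) t)%:R.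
Proof.
move=> hv ht; set L := Num.sqrt C; set J := small_parts C I.
have hvI x : x \in I -> 0 <= iarr x /\ 0 <= isize x by move/(allP hv)/valid_item_ge0.
have hJarr : all (fun y => 0 <= iarr y) J.
  by apply/allP => _ /mapP[x /hvI[? ?] ->]; have [-> _ _ _] := small_part_facts C x.
have hJsize : all (fun y => 0 <= isize y) J.
  by apply/allP => _ /mapP[x /hvI[? ?] ->]; have [_ -> _ _] := small_part_facts C x.
have hJdur : all (fun y => idur y <= L) J.
  by apply/allP => _ /mapP[x _ ->]; have [_ _ -> _] := small_part_facts C x.
have hwin0 : 0 <= \sum_(x <- I) 2 * isize x * (in_window (iarr x, iarr x + 2 * L) t)%:R.
  by rewrite big_seq; apply: sumr_ge0 => x /hvI[_ hs]; rewrite !mulr_ge0.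
have [-> | hpos] := posnP (ff_open_bins J t); first by rewrite addr_ge0.
have hOPT : (0 < OPT_t I t)%N.
  have [_ /mapP[x hx ->] hxt] := ff_open_bins_present hJarr hJsize ht hpos.
  have [ha _ _ hdep] := small_part_facts C x.
  have hxp : present t x by move: hxt; rewrite /present ha => /andP[-> /lt_le_trans ->].
  apply: OPT_t_gt0; apply/eqP => hnil.
  by have := mem_filter (present t) x I; rewrite hxp hx -/(present_items I t) hnil.
apply: le_trans (ff_open_bins_le hJarr hJsize hJdur ht) _.
apply: lerD; first by rewrite ler1n.
rewrite big_map mulr_sumr big_mkcond /= !big_seq; apply: ler_sum => x /hvI[_ hs].
case: ifP => [/andP[h1 h2] | _]; last by rewrite !mulr_ge0.
by rewrite /in_window /= h1 (_ : t < _) ?mulr1 //; lra.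
Qed.

Lemma sum_window_le_OPT_t I t : all (@valid_item R) I -> all (fun x => 1 <= idur x) I ->
  \sum_(x <- I) isize x * (in_window (iarr x, iarr x + 1) t)%:R <= (OPT_t I t)%:R.
Proof.
move=> hv hd; apply: le_trans (sum_present_le_OPT_t t hv).
rewrite big_filter [X in _ <= X]big_mkcond !big_seq; apply: ler_sum => x hx.
have [_ hs] := valid_item_ge0 (allP hv x hx); have hdx := allP hd x hx.
case: ifP => hp; first by rewrite ler_piMr // lern1 leq_b1.
rewrite /in_window /=; case: (boolP (_ && _)) => [/andP[h1 h2] | _]; last by rewrite mulr0.
by move: hp; rewrite /present h1 /dep (lt_le_trans h2) // lerD2l.
Qed.

Lemma measurable_ff_open_bins J :
  measurable_fun D (fun t : mR => ((ff_open_bins J t)%:R : R)%:E).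
Proof.
set ps := [seq (bin_open b, bin_close b) | b <- ff_bins J].
rewrite (_ : (fun t => _) = fun t => ((count id (map (@in_window R ^~ t) ps))%:R : R)%:E).
  exact: (measurable_fun_windows ps (fun bs => ((count id bs)%:R : R)%:E)).
by apply/funext => t; rewrite -map_comp count_map.
Qed.

Lemma measurable_OPT_t I : measurable_fun D (fun t : mR => ((OPT_t I t)%:R : R)%:E).
Proof.
set ps := [seq (iarr x, dep x) | x <- I].
set opt := fun P : seq (item R) => \big[minn/size P]_(k < (size P).+1 | packable P k) k.
rewrite (_ : (fun t => _) =
             fun t => ((opt (mask (map (@in_window R ^~ t) ps) I))%:R : R)%:E).
  exact: (measurable_fun_windows ps (fun bs => ((opt (mask bs I))%:R : R)%:E)).
by apply/funext => t; rewrite /OPT_t /present_items filter_mask -map_comp.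
Qed.

Lemma FirstFit_small_parts_le C I : all (@valid_item R) I ->
  (FirstFit (small_parts C I) <= OPT I + (4 * Num.sqrt C * \sum_(x <- I) isize x)%:E)%E.
Proof.
move=> hv; set L := Num.sqrt C.
have hvI x : x \in I -> 0 <= 2 * isize x /\ 0 <= iarr x.
  by move/(allP hv)/valid_item_ge0 => [? ?]; rewrite mulr_ge0.
have hL : 0 <= 2 * L by rewrite mulr_ge0 ?sqrtr_ge0.
have -> : 4 * L * \sum_(x <- I) isize x = \sum_(x <- I) 2 * isize x * (2 * L).
  by rewrite mulr_sumr; apply: eq_bigr => x _; ring.
rewrite -(integral_window_sum hL hvI) -ge0_integralD //; last 3 first.
- exact: measurable_OPT_t.
- by move=> t _; rewrite lee_fin big_seq sumr_ge0 // => x /hvI[? _]; rewrite mulr_ge0.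
- exact: measurable_window_sum.
apply: ge0_le_integral => //.
- exact: measurable_ff_open_bins.
- by apply: emeasurable_funD; [apply: measurable_OPT_t | apply: measurable_window_sum].
move=> t; rewrite /= in_itv /= andbT => ht.
by rewrite -EFinD lee_fin ff_small_parts_le.
Qed.

Lemma sum_size_le_OPT I : all (@valid_item R) I -> all (fun x => 1 <= idur x) I ->
  ((\sum_(x <- I) isize x)%:E <= OPT I)%E.
Proof.
move=> hv hd.
have hvI x : x \in I -> 0 <= isize x /\ 0 <= iarr x.
  by move/(allP hv)/valid_item_ge0 => [? ?].
under eq_bigr => x _ do rewrite -[isize x]mulr1.
rewrite -(integral_window_sum ler01 hvI); apply: ge0_le_integral => //.
- by move=> t _; rewrite lee_fin big_seq sumr_ge0 // => x /hvI[? _]; rewrite mulr_ge0.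
- exact: measurable_window_sum.
- exact: measurable_OPT_t.
by move=> t _; rewrite lee_fin sum_window_le_OPT_t.
Qed.

End SmallParts.

Theorem lemma16 (R : realType) :
  exists K : R, forall (C : R) (I : seq (item R)),
    1 <= C ->
    all (@valid_item R) I ->
    all (fun x => 1 <= idur x) I ->
    (FirstFit (small_parts C I) <= (K * Num.sqrt C)%:E * OPT I)%E.
Proof.
exists 5 => C I hC hv hd.
have hL : 1 <= Num.sqrt C by rewrite -sqrtr1 ler_wsqrtr.
have hOPT : (0 <= OPT I)%E by apply: integral_ge0 => t _; rewrite lee_fin.
apply: le_trans (lee_add_scale _ (sum_size_le_OPT hv hd) (FirstFit_small_parts_le C hv)) _.
  by rewrite mulr_ge0 ?sqrtr_ge0.
by rewrite lee_wpmul2r // lee_fin; lra.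
Qed.
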